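(* Let $G$ be a group with normal subgroups $H_1$ and $H_2$ such that $H_1$ has order $2$, $G/H_1$ has exponent $2$, and $G/H_2\cong\mathbb{Z}/4\mathbb{Z}$. Then $G$ is abelian. *)

From HB Require Import structures.
From mathcomp Require Import all_boot all_algebra.
From mathcomp Require Import monoid.

Set Implicit Arguments.
Unset Strict Implicit.
Unset Printing Implicit Defensive.

Local Open Scope group_scope.

Definition is_subgroup (G : groupType) (H : G -> Prop) : Prop :=
  H 1 /\ (forall x y, H x -> H y -> H (x * y^-1)).

Definition is_normal (G : groupType) (H : G -> Prop) : Prop :=
  is_subgroup H /\ (forall x g, H x -> H (x ^ g)).

Definition has_order2 (G : groupType) (H : G -> Prop) : Prop :=
  exists a b : G, a <> b /\ (forall x, H x <-> (x = a \/ x = b)).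

(* The quotient G/H (H normal) has exponent exactly 2:
   every coset gH satisfies (gH)^2 = H, i.e. g^2 \in H, and G/H is
   nontrivial (some coset differs from H), so the exponent is 2, not 1. *)
Definition quotient_exponent2 (G : groupType) (H : G -> Prop) : Prop :=
  (forall g : G, H (g ^+ 2)) /\ (exists g : G, ~ H g).

(* G/H is isomorphic to Z/4Z: there is a map f : G -> Z/4 which induces a
   well-defined, injective map on the cosets gH (f x = f y <-> x^-1 y \in H),
   is a group homomorphism and is surjective; i.e. the induced map
   G/H -> Z/4 is a group isomorphism. *)
Definition quotient_iso_Z4 (G : groupType) (H : G -> Prop) : Prop :=
  exists f : G -> 'Z_4,
    (forall x y : G, f (x * y) = (f x + f y)%R) /\
    (forall x y : G, f x = f y <-> H (x^-1 * y)) /\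
    (forall z : 'Z_4, exists x : G, f x = z).

Definition is_abelian (G : groupType) : Prop :=
  forall x y : G, x * y = y * x.

From HB Require Import structures.
From mathcomp Require Import all_boot all_algebra.
From mathcomp Require Import monoid.

(* Since every square lies in H1, so does every commutator [x, y];
   since f : G -> Z/4 is a homomorphism to an abelian group, f [x, y] = 0.
   Choosing g with f g = 1, the order-2 subgroup H1 is {1, g^2} with
   f (g^2) = 2, so [x, y] = 1. *)

Set Implicit Arguments.
Unset Strict Implicit.
Unset Printing Implicit Defensive.

Import GRing.Theory.

Local Open Scope group_scope.

Section Subgroup.

Variables (G : groupType) (H : G -> Prop).
Hypothesis subH : is_subgroup H.

Lemma subgroup1 : H 1.
Proof. by case: subH. Qed.

Lemma subgroupV x : H x -> H x^-1.
Proof. by move=> Hx; have := proj2 subH 1 x subgroup1 Hx; rewrite mul1g. Qed.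

Lemma subgroupM x y : H x -> H y -> H (x * y).
Proof. by move=> Hx Hy; have := proj2 subH x y^-1 Hx (subgroupV Hy); rewrite invgK. Qed.

Lemma subgroup_commg_of_sq : (forall g, H (g ^+ 2)) -> forall x y, H [~ x, y].
Proof.
move=> Hsq x y.
have -> : [~ x, y] = x^-1 ^+ 2 * (x * y^-1) ^+ 2 * y ^+ 2.
  by rewrite /commg /conjg !expg2 !mulgA !mulgVK.
by apply: subgroupM; first apply: subgroupM.
Qed.

End Subgroup.

Section MorphismToAbelian.

Variables (G : groupType) (V : zmodType) (f : G -> V).
Hypothesis fM : forall x y, f (x * y) = (f x + f y)%R.

Lemma morph1g : f 1 = 0%R.
Proof. by apply: (addrI (f 1)); rewrite -fM mulg1 addr0. Qed.

Lemma morphVg x : f x^-1 = (- f x)%R.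
Proof. by apply: (addrI (f x)); rewrite -fM mulgV morph1g subrr. Qed.

Lemma morph_commg x y : f [~ x, y] = 0%R.
Proof. by rewrite /commg /conjg !fM !morphVg addrCA addKr addNr. Qed.

End MorphismToAbelian.

Lemma order2_memP (G : groupType) (H : G -> Prop) u v w :
  has_order2 H -> H u -> H v -> u <> v -> H w -> w = u \/ w = v.
Proof.
case=> [a [b [_ memH]]] /memH Hu /memH Hv neq_uv /memH Hw.
by case: Hu Hv Hw neq_uv => -> [] -> [] -> neq; first [by left | by right | by case: neq].
Qed.

Theorem lemma4p1 (G : groupType) (H1 H2 : G -> Prop) :
  is_normal H1 -> is_normal H2 ->
  has_order2 H1 -> quotient_exponent2 H1 -> quotient_iso_Z4 H2 ->
  is_abelian G.
Proof.
move=> [subH1 _] _ ordH1 [sqH1 _] [f [fM [_ f_surj]]] x y.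
have [g fg] := f_surj 1%R.
have f_sq : f (g ^+ 2) = 2%R by rewrite expg2 fM fg.
have sq_neq1 : g ^+ 2 <> 1 by move=> sq1; move: f_sq; rewrite sq1 morph1g.
have := order2_memP ordH1 (subgroup1 subH1) (sqH1 g) (nesym sq_neq1)
  (subgroup_commg_of_sq subH1 sqH1 x y).
case=> [comm1 | comm_sq]; first by apply/commgP; rewrite comm1.
by move: (morph_commg fM x y); rewrite comm_sq f_sq.
Qed.
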